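(* Let $N\ge1$ and let $\xi_1<\dots<\xi_{N+1}$ be nodes in $[-1,1]$ with positive weights $w_1,\dots,w_{N+1}$ such that $\sum_i w_if(\xi_i)=\int_{-1}^1f\,d\xi$ for every polynomial $f$ of degree $\le 2N-1$ (e.g. Gauss–Lobatto–Legendre or Gauss–Legendre nodes). Let $\mathcal L_1,\dots,\mathcal L_{N+1}$ be the Lagrange polynomials of degree $N$ with $\mathcal L_j(\xi_i)=\delta_{ij}$. Define $(N+1)\times(N+1)$ matrices $W^N(a)=\mathrm{diag}(w_ja_j)$ for a vector $a=(a_j)$ of nodal values, $Q^N_{ij}=\sum_m w_m\mathcal L_i(\xi_m)\mathcal L_j'(\xi_m)$, and vectors $\boldsymbol e_1=(\mathcal L_j(-1))_j$, $\boldsymbol e_{N+1}=(\mathcal L_j(1))_j$. Partition $[0,L]$ into elements $[x_k,x_{k+1}]$, $k=1,\dots,K$, with $\Delta x_k=x_{k+1}-x_k>0$. On element $k$ let $\rho^k(\xi)=\sum_j\rho^k_j\mathcal L_j(\xi)$, $\mu^k(\xi)=\sum_j\mu^k_j\mathcal L_j(\xi)$ with $\rho^k_j,\mu^k_j>0$ and $\rho^k(\pm1),\mu^k(\pm1)>0$, and set $Z_s^k(\pm1)=\sqrt{\rho^k(\pm1)\mu^k(\pm1)}$. For unknowns $\boldsymbol v^k(t),\boldsymbol\sigma^k(t)\in\mathbb R^{N+1}$ let $v^k(\xi,t)=\sum_jv^k_j(t)\mathcal L_j(\xi)$, $\sigma^k(\xi,t)=\sum_j\sigma^k_j(t)\mathcal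 L_j(\xi)$. Fix $r_0,r_L\in[-1,1]$ and, for each interior interface between elements $k-1$ and $k$ ($2\le k\le K$), $\alpha^k\in[0,\infty]$. Define hat-variables: (i) left boundary of element $1$: $p_0=\frac12(Z_s^1(-1)v^1(-1,t)+\sigma^1(-1,t))$, $\widehat v^1(-1)=\frac{1+r_0}{Z_s^1(-1)}p_0$, $\widehat\sigma^1(-1)=(1-r_0)p_0$; (ii) right boundary of element $K$: $q_L=\frac12(Z_s^K(1)v^K(1,t)-\sigma^K(1,t))$, $\widehat v^K(1)=\frac{1+r_L}{Z_s^K(1)}q_L$, $\widehat\sigma^K(1)=-(1-r_L)q_L$; (iii) interface between elements $k-1$ and $k$: with $Z^-=Z_s^{k-1}(1)$, $Z^+=Z_s^k(-1)$, $q^-=\frac12(Z^-v^{k-1}(1,t)-\sigma^{k-1}(1,t))$, $p^+=\frac12(Z^+v^k(-1,t)+\sigma^k(-1,t))$, $\eta^k=\frac{Z^-Z^+}{Z^-+Z^+}$, $\Phi^k=\eta^k(\frac2{Z^+}p^+-\frac2{Z^-}q^-)$, set $\widehat\sigma^k=\frac{\alpha^k}{\eta^k+\alpha^k}\Phi^k$ ($=\Phi^k$ if $\alpha^k=\infty$), $\widehat\sigma^{k-1}(1)=\widehat\sigma^k(-1)=\widehat\sigma^k$, $\widehat v^{k-1}(1)=\frac{2q^-+\widehat\sigma^k}{Z^-}$, $\widehat v^k(-1)=\frac{2p^+-\widehat\sigma^k}{Z^+}$. Let $F^k(-1,t)=\frac{Z_s^k(-1)}{2}(v^k(-1,t)-\widehat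 v^k(-1))-\frac12(\sigma^k(-1,t)-\widehat\sigma^k(-1))$ and $G^k(1,t)=\frac{Z_s^k(1)}{2}(v^k(1,t)-\widehat v^k(1))+\frac12(\sigma^k(1,t)-\widehat\sigma^k(1))$. Suppose $(\boldsymbol v^k,\boldsymbol\sigma^k)_{k=1}^K$ are differentiable and satisfy, for all $k$, $$\frac{\Delta x_k}{2}W^N(\rho^k)\frac{d\boldsymbol v^k}{dt}=Q^N\boldsymbol\sigma^k-\boldsymbol e_1F^k(-1,t)-\boldsymbol e_{N+1}G^k(1,t),$$ $$\frac{\Delta x_k}{2}W^N(1/\mu^k)\frac{d\boldsymbol\sigma^k}{dt}=Q^N\boldsymbol v^k+\boldsymbol e_1\frac{F^k(-1,t)}{Z_s^k(-1)}-\boldsymbol e_{N+1}\frac{G^k(1,t)}{Z_s^k(1)},$$ where $W^N(\rho^k)=\mathrm{diag}(w_j\rho^k_j)$ and $W^N(1/\mu^k)=\mathrm{diag}(w_j/\mu^k_j)$. Define $\mathcal E(t)=\sum_{k=1}^K\frac{\Delta x_k}{2}\sum_{j=1}^{N+1}\frac{w_j}{2}\big(\rho^k_j|v^k_j|^2+\frac{1}{\mu^k_j}|\sigma^k_j|^2\big)$. Then $$\frac{d\mathcal E}{dt}=-\sum_{k=1}^K\Big(\frac{|F^k(-1,t)|^2}{Z_s^k(-1)}+\frac{|G^k(1,t)|^2}{Z_s^k(1)}\Big)-\sum_{k=2}^K\frac{\alpha^k}{(\eta^k+\alpha^k)^2}|\Phi^k|^2-\frac{1-r_0^2}{Z_s^1(-1)}p_0^2-\frac{1-r_L^2}{Z_s^K(1)}q_L^2,$$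 where the $k$-th friction term is $0$ when $\alpha^k=\infty$. In particular $\frac{d\mathcal E}{dt}\le0$ for every mesh (asymptotic stability).
   Context: This is the nodal discontinuous Galerkin semi-discretization of the 1D elastic wave equation $\rho\partial_tv=\partial_x\sigma$, $\frac1\mu\partial_t\sigma=\partial_xv$ on $[0,L]$, each element mapped to $[-1,1]$ by $x=x_k+\frac{\Delta x_k}{2}(1+\xi)$. Element faces are coupled through frictional interface conditions (force balance plus $\widehat\sigma=\alpha[\![\widehat v]\!]$, $\alpha=\infty$ meaning a locked interface) and the external boundaries through $\frac{Z_s}{2}(1-r)v\mp\frac{1+r}{2}\sigma=0$ with reflection coefficients $r_0$ (at $x=0$) and $r_L$ (at $x=L$). The hat-variables are computed from the polynomial traces at $\xi=\pm1$. *)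

From Stdlib Require Import Reals Lra Lia Arith.
Open Scope R_scope.

Fixpoint sumR (n : nat) (f : nat -> R) : R :=
  match n with O => 0 | S n' => sumR n' f + f n' end.

Fixpoint prodR (n : nat) (f : nat -> R) : R :=
  match n with O => 1 | S n' => prodR n' f * f n' end.

(* Nodes are indexed 0..N (the paper's 1..N+1); elements 0..K-1 (paper's 1..K). *)

Definition lag (xi : nat -> R) (N j : nat) (x : R) : R :=
  prodR (S N) (fun m => if Nat.eqb m j then 1 else (x - xi m) / (xi j - xi m)).

Definition interp (xi : nat -> R) (N : nat) (c : nat -> R) (x : R) : R :=
  sumR (S N) (fun j => c j * lag xi N j x).

(* Q^N_{ij} = sum_m w_m L_i(xi_m) L_j'(xi_m), with Lp j the derivative of L_j *)
Definition QN (xi w : nat -> R) (N : nat) (Lp : nat -> R -> R) (i j : nat) : R :=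
  sumR (S N) (fun m => w m * lag xi N i (xi m) * Lp j (xi m)).

(* Interface friction parameter alpha in [0, infinity]: None = infinity (locked). *)

Section Fluxes.
Variables (xi : nat -> R) (N K : nat) (rho mu : nat -> nat -> R)
          (r0 rL : R) (alpha : nat -> option R).
(* State at a fixed time: V k j = v^k_j(t), S k j = sigma^k_j(t). *)
Variables (V Sg : nat -> nat -> R).

Definition Zs (k : nat) (s : R) : R :=
  sqrt (interp xi N (rho k) s * interp xi N (mu k) s).

Definition vtr (k : nat) (s : R) : R := interp xi N (V k) s.
Definition str (k : nat) (s : R) : R := interp xi N (Sg k) s.

Definition p0 : R := / 2 * (Zs 0 (-1) * vtr 0 (-1) + str 0 (-1)).
Definition qL : R := / 2 * (Zs (K - 1) 1 * vtr (K - 1) 1 - str (K - 1) 1).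

(* interface k, between elements k-1 and k (1 <= k <= K-1) *)
Definition Zm (k : nat) : R := Zs (k - 1) 1.
Definition Zp (k : nat) : R := Zs k (-1).
Definition qm (k : nat) : R := / 2 * (Zm k * vtr (k - 1) 1 - str (k - 1) 1).
Definition pp (k : nat) : R := / 2 * (Zp k * vtr k (-1) + str k (-1)).
Definition eta (k : nat) : R := Zm k * Zp k / (Zm k + Zp k).
Definition Phi (k : nat) : R := eta k * (2 / Zp k * pp k - 2 / Zm k * qm k).
Definition sighat (k : nat) : R :=
  match alpha k with Some a => a / (eta k + a) * Phi k | None => Phi k end.
Definition fric (k : nat) : R :=
  match alpha k with Some a => a / (eta k + a) ^ 2 * (Phi k) ^ 2 | None => 0 end.

(* hat variables at xi = -1 (L) and xi = 1 (R) of element k *)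
Definition vhatL (k : nat) : R :=
  if Nat.eqb k 0 then (1 + r0) / Zs 0 (-1) * p0
  else (2 * pp k - sighat k) / Zp k.
Definition shatL (k : nat) : R :=
  if Nat.eqb k 0 then (1 - r0) * p0 else sighat k.
Definition vhatR (k : nat) : R :=
  if Nat.eqb k (K - 1) then (1 + rL) / Zs (K - 1) 1 * qL
  else (2 * qm (S k) + sighat (S k)) / Zm (S k).
Definition shatR (k : nat) : R :=
  if Nat.eqb k (K - 1) then - ((1 - rL) * qL) else sighat (S k).

Definition Fm (k : nat) : R :=
  Zs k (-1) / 2 * (vtr k (-1) - vhatL k) - / 2 * (str k (-1) - shatL k).
Definition Gp (k : nat) : R :=
  Zs k 1 / 2 * (vtr k 1 - vhatR k) + / 2 * (str k 1 - shatR k).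

End Fluxes.

Definition energy (N K : nat) (w x : nat -> R) (rho mu : nat -> nat -> R)
  (V Sg : nat -> nat -> R) : R :=
  sumR K (fun k => (x (S k) - x k) / 2 *
    sumR (S N) (fun j => w j / 2 *
      (rho k j * (V k j) ^ 2 + / mu k j * (Sg k j) ^ 2))).

From Stdlib Require Import Reals Lra Lia FunctionalExtensionality.
From Coquelicot Require Coquelicot.
Open Scope R_scope.

(* Exactness of the quadrature in degree 2N - 1 makes Q^N a summation-by-parts operator:
   a^T Q^N b + b^T Q^N a = A(1) B(1) - A(-1) B(-1) for the interpolants A, B of a, b.
   Hence in the energy rate of each element the volume terms collapse to the traces
   v sigma at its faces, and the rate of the whole mesh is a sum of contributions of the
   two outer boundaries and of the interfaces. The hat variables are built so that each
   such contribution is, by direct algebra, minus the squared penalties F, G weighted by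
   1/Z_s, minus the friction term alpha/(eta + alpha)^2 Phi^2 at an interface, and minus
   the reflection term (1 - r^2)/Z_s p^2 at a boundary. *)

Lemma sumR_ext n f g : (forall i, (i < n)%nat -> f i = g i) -> sumR n f = sumR n g.
Proof.
induction n as [|n IH]; intros Hfg; simpl; [reflexivity|].
rewrite IH, Hfg; [reflexivity|lia|intros; apply Hfg; lia].
Qed.

Lemma sumR_add n f g : sumR n (fun i => f i + g i) = sumR n f + sumR n g.
Proof. induction n as [|n IH]; simpl; [ring|rewrite IH; ring]. Qed.

Lemma sumR_mul_l n c f : c * sumR n f = sumR n (fun i => c * f i).
Proof. induction n as [|n IH]; simpl; [ring|rewrite <- IH; ring]. Qed.

Lemma sumR_swap n m (f : nat -> nat -> R) :
  sumR n (fun i => sumR m (fun j => f i j)) = sumR m (fun j => sumR n (fun i => f i j)).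
Proof.
induction n as [|n IH]; simpl.
- induction m as [|m IHm]; simpl; [reflexivity|rewrite <- IHm; ring].
- rewrite IH, <- sumR_add. reflexivity.
Qed.

Lemma sumR_mul_sumR n m f g :
  sumR n f * sumR m g = sumR n (fun i => sumR m (fun j => f i * g j)).
Proof.
rewrite Rmult_comm, sumR_mul_l. apply sumR_ext; intros i _.
rewrite Rmult_comm, sumR_mul_l. reflexivity.
Qed.

Lemma sumR_succ_l n g : sumR (S n) g = g 0%nat + sumR n (fun m => g (S m)).
Proof. induction n as [|n IH]; simpl in *; [ring|rewrite IH; ring]. Qed.

Lemma sumR_nonneg n f : (forall i, (i < n)%nat -> 0 <= f i) -> 0 <= sumR n f.
Proof.
induction n as [|n IH]; intros Hf; simpl; [lra|].
assert (0 <= f n) by (apply Hf; lia).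
assert (0 <= sumR n f) by (apply IH; intros; apply Hf; lia).
lra.
Qed.

Lemma sumR_opp_sub n f g : sumR n (fun k => - f k - g k) = - sumR n f - sumR n g.
Proof. induction n as [|n IH]; simpl; [ring|rewrite IH; ring]. Qed.

Lemma sumR_linear_expand n (a b X Y e1 eN : nat -> R) F G F' G' :
  sumR n (fun j => a j * (X j - e1 j * F - eN j * G) + b j * (Y j + e1 j * F' - eN j * G')) =
  sumR n (fun j => a j * X j) + sumR n (fun j => b j * Y j)
  - F * sumR n (fun j => a j * e1 j) - G * sumR n (fun j => a j * eN j)
  + F' * sumR n (fun j => b j * e1 j) - G' * sumR n (fun j => b j * eN j).
Proof. induction n as [|n IH]; simpl; [ring|rewrite IH; ring]. Qed.

Lemma sumR_regroup_faces K (Lf Rf : nat -> R) : (1 <= K)%nat ->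
  sumR K (fun k => Lf k + Rf k) =
  Lf 0%nat + sumR (K - 1) (fun k => Rf k + Lf (S k)) + Rf (K - 1)%nat.
Proof.
intros HK. destruct K as [|K]; [lia|]. replace (S K - 1)%nat with K by lia.
clear HK. induction K as [|K IH]; simpl in *; [ring|rewrite IH; ring].
Qed.

Lemma Rdiv_le_0_compat a b : 0 <= a -> 0 < b -> 0 <= a / b.
Proof. intros; apply Rmult_le_pos; [assumption|apply Rlt_le, Rinv_0_lt_compat; assumption]. Qed.

Lemma derivable_pt_lim_sqr f x l :
  derivable_pt_lim f x l -> derivable_pt_lim (fun y => f y ^ 2) x (2 * f x * l).
Proof.
intros Hf. apply (derivable_pt_lim_ext (fun y => f y * f y)); [intros; ring|].
replace (2 * f x * l) with (l * f x + f x * l) by ring.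
apply derivable_pt_lim_mult; assumption.
Qed.

Lemma derivable_pt_lim_sumR n (f : nat -> R -> R) df x :
  (forall k, (k < n)%nat -> derivable_pt_lim (f k) x (df k)) ->
  derivable_pt_lim (fun y => sumR n (fun k => f k y)) x (sumR n df).
Proof.
induction n as [|n IH]; intros Hf; simpl.
- apply derivable_pt_lim_const.
- apply derivable_pt_lim_plus; [apply IH; intros|]; apply Hf; lia.
Qed.

(** * Polynomial functions *)

(* [polyfun n f]: [f] is a polynomial function of degree < n, in Horner form. *)
Fixpoint polyfun (n : nat) (f : R -> R) : Prop :=
  match n with
  | O => forall s, f s = 0
  | S n' => exists c h, polyfun n' h /\ forall s, f s = c + s * h s
  end.

Lemma polyfun_ext n f g : (forall s, f s = g s) -> polyfun n f -> polyfun n g.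
Proof. intros Hfg; replace g with f; [auto|apply functional_extensionality, Hfg]. Qed.

Lemma polyfun_0 n : polyfun n (fun _ => 0).
Proof.
induction n as [|n IH]; simpl; [auto|].
exists 0, (fun _ => 0); split; [exact IH|intros; ring].
Qed.

Lemma polyfun_const n c : polyfun (S n) (fun _ => c).
Proof. exists c, (fun _ => 0); split; [apply polyfun_0|intros; ring]. Qed.

Lemma polyfun_add n f g : polyfun n f -> polyfun n g -> polyfun n (fun s => f s + g s).
Proof.
revert f g; induction n as [|n IH]; simpl; intros f g Hf Hg.
- intros s; rewrite Hf, Hg; ring.
- destruct Hf as [c [h [Hh Hf]]], Hg as [d [k [Hk Hg]]].
  exists (c + d), (fun s => h s + k s); split; [auto|intros s; rewrite Hf, Hg; ring].
Qed.

Lemma polyfun_scal n a f : polyfun n f -> polyfun n (fun s => a * f s).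
Proof.
revert f; induction n as [|n IH]; simpl; intros f Hf.
- intros s; rewrite Hf; ring.
- destruct Hf as [c [h [Hh Hf]]].
  exists (a * c), (fun s => a * h s); split; [auto|intros s; rewrite Hf; ring].
Qed.

Lemma polyfun_mulX n h : polyfun n h -> polyfun (S n) (fun s => s * h s).
Proof. intros Hh; exists 0, h; split; [exact Hh|intros; ring]. Qed.

Lemma polyfun_succ n f : polyfun n f -> polyfun (S n) f.
Proof.
revert f; induction n as [|n IH]; intros f Hf.
- exists 0, (fun _ => 0); split; [apply polyfun_0|intros s; simpl in Hf; rewrite Hf; ring].
- destruct Hf as [c [h [Hh Hf]]]. exists c, h; split; [apply IH, Hh|exact Hf].
Qed.

Lemma polyfun_le n m f : (n <= m)%nat -> polyfun n f -> polyfun m f.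
Proof. induction 1; [auto|intros; apply polyfun_succ; auto]. Qed.

Lemma polyfun_mul n m f g :
  polyfun (S n) f -> polyfun m g -> polyfun (n + m) (fun s => f s * g s).
Proof.
revert f; induction n as [|n IH]; intros f [c [h [Hh Hf]]] Hg.
- apply (polyfun_ext _ (fun s => c * g s)); [|apply polyfun_scal, Hg].
  intros s; rewrite Hf; simpl in Hh; rewrite Hh; ring.
- apply (polyfun_ext _ (fun s => c * g s + s * (h s * g s))).
  + intros s; rewrite Hf; ring.
  + apply polyfun_add.
    * apply (polyfun_le m); [lia|apply polyfun_scal, Hg].
    * apply polyfun_mulX, IH; assumption.
Qed.

Lemma polyfun_sum n m (f : nat -> R -> R) :
  (forall k, (k < m)%nat -> polyfun n (f k)) -> polyfun n (fun s => sumR m (fun k => f k s)).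
Proof.
induction m as [|m IH]; intros Hf; simpl; [apply polyfun_0|].
apply polyfun_add; [apply IH; intros|]; apply Hf; lia.
Qed.

Lemma polyfun_prod_affine m (f : nat -> R -> R) :
  (forall k, (k < m)%nat -> polyfun 2 (f k)) ->
  polyfun (S m) (fun s => prodR m (fun k => f k s)).
Proof.
induction m as [|m IH]; intros Hf; [apply (polyfun_const 0 1)|].
replace (S (S m)) with (m + 2)%nat by lia.
apply polyfun_mul; [apply IH; intros|]; apply Hf; lia.
Qed.

Lemma polyfun_prod m (f : nat -> R -> R) j : (j < m)%nat -> polyfun 1 (f j) ->
  (forall k, (k < m)%nat -> polyfun 2 (f k)) ->
  polyfun m (fun s => prodR m (fun k => f k s)).
Proof.
induction m as [|m IH]; intros Hj Hfj Hf; [lia|].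
change (polyfun (S m) (fun s => prodR m (fun k => f k s) * f m s)).
destruct (Nat.eq_dec j m) as [->|Hjm].
- replace (S m) with (m + 1)%nat by lia.
  apply polyfun_mul; [apply polyfun_prod_affine; intros; apply Hf; lia|exact Hfj].
- destruct m as [|m]; [lia|].
  replace (S (S m)) with (m + 2)%nat by lia.
  apply polyfun_mul; [apply IH; [lia|exact Hfj|intros; apply Hf; lia]|apply Hf; lia].
Qed.

Lemma polyfun_derivable n f : polyfun (S n) f ->
  exists df, polyfun n df /\ forall s, derivable_pt_lim f s (df s).
Proof.
revert f; induction n as [|n IH]; intros f [c [h [Hh Hf]]].
- exists (fun _ => 0); split; [simpl; auto|intros s].
  apply (derivable_pt_lim_ext (fun _ => c)); [|apply derivable_pt_lim_const].
  intros y; rewrite Hf; simpl in Hh; rewrite Hh; ring.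
- destruct (IH h Hh) as [dh [Hdh Hd]].
  exists (fun s => h s + s * dh s); split.
  + apply polyfun_add; [exact Hh|apply polyfun_mulX, Hdh].
  + intros s. apply (derivable_pt_lim_ext (fun y => c + y * h y)); [intros; symmetry; apply Hf|].
    replace (h s + s * dh s) with (0 + (1 * h s + s * dh s)) by ring.
    apply derivable_pt_lim_plus; [apply derivable_pt_lim_const|].
    apply derivable_pt_lim_mult; [apply derivable_pt_lim_id|apply Hd].
Qed.

Lemma polyfun_continuous n f : polyfun n f -> forall s, continuity_pt f s.
Proof.
intros Hf s. destruct (polyfun_derivable _ _ (polyfun_succ _ _ Hf)) as [df [_ Hd]].
apply derivable_continuous_pt. exists (df s). apply Hd.
Qed.

Lemma polyfun_coef n f : polyfun n f ->
  exists c, forall s, f s = sumR n (fun m => c m * s ^ m).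
Proof.
revert f; induction n as [|n IH]; intros f Hf.
- exists (fun _ => 0); intros s; simpl in *; auto.
- destruct Hf as [c0 [h [Hh Hf]]]. destruct (IH h Hh) as [d Hd].
  exists (fun m => match m with O => c0 | S m' => d m' end). intros s.
  rewrite sumR_succ_l, Hf, Hd, sumR_mul_l; simpl. f_equal; [ring|].
  apply sumR_ext; intros; ring.
Qed.

(** * Lagrange interpolants *)

Section Lagrange.
Variables (xi : nat -> R) (N : nat) (Lp : nat -> R -> R).
Hypothesis Lp_deriv : forall j s, derivable_pt_lim (lag xi N j) s (Lp j s).

Lemma lag_polyfun j : (j <= N)%nat -> polyfun (S N) (lag xi N j).
Proof.
intros Hj. apply (polyfun_prod _ _ j); [lia|rewrite Nat.eqb_refl; apply (polyfun_const 0 1)|].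
intros k _. destruct (Nat.eqb k j); [apply (polyfun_const 1 1)|].
exists (- xi k / (xi j - xi k)), (fun _ => / (xi j - xi k)).
split; [apply (polyfun_const 0)|intros s; unfold Rdiv; ring].
Qed.

Lemma Lp_polyfun j : (j <= N)%nat -> polyfun N (Lp j).
Proof.
intros Hj. destruct (polyfun_derivable _ _ (lag_polyfun j Hj)) as [df [Hdf Hd]].
apply (polyfun_ext _ df); [|exact Hdf].
intros s; apply (uniqueness_limite (lag xi N j) s); auto.
Qed.

Lemma interp_polyfun a : polyfun (S N) (interp xi N a).
Proof.
apply (polyfun_sum _ _ (fun j s => a j * lag xi N j s)).
intros; apply polyfun_scal, lag_polyfun; lia.
Qed.

Lemma interp_derivable a s :
  derivable_pt_lim (interp xi N a) s (sumR (S N) (fun i => a i * Lp i s)).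
Proof.
apply (derivable_pt_lim_sumR _ (fun k y => a k * lag xi N k y)).
intros; apply derivable_pt_lim_scal, Lp_deriv.
Qed.

Lemma interp_derivative_polyfun a : polyfun N (fun s => sumR (S N) (fun i => a i * Lp i s)).
Proof.
apply (polyfun_sum _ _ (fun i s => a i * Lp i s)).
intros; apply polyfun_scal, Lp_polyfun; lia.
Qed.

End Lagrange.

(* Coquelicot is imported only inside this section: its [interp] would shadow ours. *)
Section FundamentalTheorem.
Import Coquelicot.Coquelicot.

Lemma RiemannInt_derivative (g dg : R -> R) a b (pr : Riemann_integrable dg a b) :
  (forall s, derivable_pt_lim g s (dg s)) -> (forall s, continuity_pt dg s) ->
  RiemannInt pr = g b - g a.
Proof.
intros Hg Hdg. rewrite <- RInt_Reals.
apply (is_RInt_unique dg a b).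
apply (is_RInt_derive g dg); intros s _.
- apply is_derive_Reals, Hg.
- apply continuity_pt_filterlim, Hdg.
Qed.

End FundamentalTheorem.

(** * Summation by parts *)

Section SummationByParts.
Variables (xi w : nat -> R) (N : nat) (Lp : nat -> R -> R).
Hypothesis quadrature_exact :
  forall (c : nat -> R) (f : R -> R) (pr : Riemann_integrable f (-1) 1),
    (forall s, f s = sumR (2 * N) (fun m => c m * s ^ m)) ->
    sumR (S N) (fun i => w i * f (xi i)) = RiemannInt pr.
Hypothesis Lp_deriv : forall j s, derivable_pt_lim (lag xi N j) s (Lp j s).

Lemma QN_form_quadrature a b :
  sumR (S N) (fun j => a j * sumR (S N) (fun i => QN xi w N Lp j i * b i)) =
  sumR (S N) (fun m => w m * (interp xi N a (xi m) * sumR (S N) (fun i => b i * Lp i (xi m)))).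
Proof.
unfold QN, interp.
transitivity (sumR (S N) (fun j => sumR (S N) (fun m => sumR (S N) (fun i =>
  a j * b i * w m * lag xi N j (xi m) * Lp i (xi m))))).
{ apply sumR_ext; intros j _. rewrite <- sumR_swap, sumR_mul_l.
  apply sumR_ext; intros i _.
  rewrite (Rmult_comm (sumR _ _) (b i)), <- Rmult_assoc, sumR_mul_l.
  apply sumR_ext; intros; ring. }
rewrite sumR_swap. apply sumR_ext; intros m _.
rewrite sumR_mul_sumR, sumR_mul_l. apply sumR_ext; intros j _.
rewrite sumR_mul_l. apply sumR_ext; intros; ring.
Qed.

(* The discrete analogue of integrating (A B)' over [-1, 1]: A B' + B A' has degree
   2N - 1, so the quadrature integrates it exactly. *)
Lemma QN_summation_by_parts a b :
  sumR (S N) (fun j => a j * sumR (S N) (fun i => QN xi w N Lp j i * b i)) +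
  sumR (S N) (fun j => b j * sumR (S N) (fun i => QN xi w N Lp j i * a i)) =
  interp xi N a 1 * interp xi N b 1 - interp xi N a (-1) * interp xi N b (-1).
Proof.
rewrite !QN_form_quadrature, <- sumR_add.
set (A := interp xi N a). set (B := interp xi N b).
set (A' := fun s => sumR (S N) (fun i => a i * Lp i s)).
set (B' := fun s => sumR (S N) (fun i => b i * Lp i s)).
set (f := fun s => A s * B' s + B s * A' s).
assert (Hf : polyfun (N + N) f).
{ apply polyfun_add; apply polyfun_mul;
    (apply interp_polyfun || apply (interp_derivative_polyfun xi); exact Lp_deriv). }
assert (f_cont : forall s, continuity_pt f s) by (apply (polyfun_continuous _ _ Hf)).
assert (Hab : -1 <= 1) by lra.
pose (pr := continuity_implies_RiemannInt Hab (fun s _ => f_cont s)).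
destruct (polyfun_coef _ _ Hf) as [c Hc].
transitivity (sumR (S N) (fun i => w i * f (xi i))).
{ apply sumR_ext; intros; unfold f, A', B'; ring. }
rewrite (quadrature_exact c f pr); [|replace (2 * N)%nat with (N + N)%nat by lia; exact Hc].
apply (RiemannInt_derivative (fun s => A s * B s)); [intros s|exact f_cont].
replace (f s) with (A' s * B s + A s * B' s) by (unfold f; ring).
apply derivable_pt_lim_mult; apply (interp_derivable xi); exact Lp_deriv.
Qed.

Lemma element_energy_rate (h : R) (rho mu a b da db : nat -> R) (F G Zl Zr : R) :
  (forall j, (j <= N)%nat -> 0 < mu j) ->
  (forall j, (j <= N)%nat ->
     h * (w j * rho j) * da j =
       sumR (S N) (fun i => QN xi w N Lp j i * b i) - lag xi N j (-1) * F - lag xi N j 1 * G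
     /\ h * (w j / mu j) * db j =
       sumR (S N) (fun i => QN xi w N Lp j i * a i)
       + lag xi N j (-1) * (F / Zl) - lag xi N j 1 * (G / Zr)) ->
  h * sumR (S N) (fun j => w j / 2 * (rho j * (2 * a j * da j) + / mu j * (2 * b j * db j))) =
  (- interp xi N a (-1) * (interp xi N b (-1) + F) + interp xi N b (-1) * (F / Zl))
  + (interp xi N a 1 * (interp xi N b 1 - G) - interp xi N b 1 * (G / Zr)).
Proof.
intros Hmu Hscheme. rewrite sumR_mul_l.
transitivity (sumR (S N) (fun j => a j * (h * (w j * rho j) * da j) + b j * (h * (w j / mu j) * db j))).
{ apply sumR_ext; intros j Hj. assert (0 < mu j) by (apply Hmu; lia). field. lra. }
transitivity (sumR (S N) (fun j =>
  a j * (sumR (S N) (fun i => QN xi w N Lp j i * b i) - lag xi N j (-1) * F - lag xi N j 1 * G)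
  + b j * (sumR (S N) (fun i => QN xi w N Lp j i * a i)
           + lag xi N j (-1) * (F / Zl) - lag xi N j 1 * (G / Zr)))).
{ apply sumR_ext; intros j Hj. destruct (Hscheme j ltac:(lia)) as [-> ->]. reflexivity. }
rewrite sumR_linear_expand, QN_summation_by_parts.
unfold interp. ring.
Qed.

End SummationByParts.

(** * Energy of the mesh *)

Definition energy_rate (N K : nat) (w x : nat -> R) (rho mu : nat -> nat -> R)
  (V Sg dV dSg : nat -> nat -> R) : R :=
  sumR K (fun k => (x (S k) - x k) / 2 *
    sumR (S N) (fun j => w j / 2 *
      (rho k j * (2 * V k j * dV k j) + / mu k j * (2 * Sg k j * dSg k j)))).

Lemma energy_derivable N K w x rho mu (v sg : nat -> nat -> R -> R) (dv dsg : nat -> nat -> R) t :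
  (forall k j, (k < K)%nat -> (j <= N)%nat ->
     derivable_pt_lim (v k j) t (dv k j) /\ derivable_pt_lim (sg k j) t (dsg k j)) ->
  derivable_pt_lim
    (fun t' => energy N K w x rho mu (fun k j => v k j t') (fun k j => sg k j t')) t
    (energy_rate N K w x rho mu (fun k j => v k j t) (fun k j => sg k j t) dv dsg).
Proof.
intros Hdiff. apply derivable_pt_lim_sumR; intros k Hk.
apply derivable_pt_lim_scal, derivable_pt_lim_sumR; intros j Hj.
destruct (Hdiff k j Hk ltac:(lia)) as [Hv Hsg].
apply derivable_pt_lim_scal, derivable_pt_lim_plus;
  apply derivable_pt_lim_scal, derivable_pt_lim_sqr; assumption.
Qed.

Lemma Zs_pos xi N rho mu k s :
  0 < interp xi N (rho k) s -> 0 < interp xi N (mu k) s -> 0 < Zs xi N rho mu k s.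
Proof. intros; apply sqrt_lt_R0, Rmult_lt_0_compat; assumption. Qed.

Section Faces.
Variables (xi : nat -> R) (N K : nat) (rho mu : nat -> nat -> R)
          (r0 rL : R) (alpha : nat -> option R) (V Sg : nat -> nat -> R).

Local Notation Z := (Zs xi N rho mu).
Local Notation vtr := (vtr xi N V).
Local Notation str := (str xi N Sg).
Local Notation F := (Fm xi N rho mu r0 alpha V Sg).
Local Notation G := (Gp xi N K rho mu rL alpha V Sg).

Definition left_face_rate (k : nat) : R :=
  - vtr k (-1) * (str k (-1) + F k) + str k (-1) * (F k / Z k (-1)).
Definition right_face_rate (k : nat) : R :=
  vtr k 1 * (str k 1 - G k) - str k 1 * (G k / Z k 1).

Lemma left_boundary_rate : 0 < Z 0 (-1) ->
  left_face_rate 0 = - (F 0 ^ 2 / Z 0 (-1)) - (1 - r0 ^ 2) / Z 0 (-1) * p0 xi N rho mu V Sg ^ 2.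
Proof. intros HZ. unfold left_face_rate, Fm, vhatL, shatL, p0; simpl. field. lra. Qed.

Lemma right_boundary_rate : 0 < Z (K - 1) 1 ->
  right_face_rate (K - 1) =
  - (G (K - 1) ^ 2 / Z (K - 1) 1) - (1 - rL ^ 2) / Z (K - 1) 1 * qL xi N K rho mu V Sg ^ 2.
Proof.
intros HZ. unfold right_face_rate, Gp, vhatR, shatR, qL. rewrite Nat.eqb_refl. field. lra.
Qed.

Lemma interface_rate k : (k < K - 1)%nat -> 0 < Z k 1 -> 0 < Z (S k) (-1) ->
  (forall a, alpha (S k) = Some a -> 0 <= a) ->
  right_face_rate k + left_face_rate (S k) =
  - (G k ^ 2 / Z k 1 + F (S k) ^ 2 / Z (S k) (-1)) - fric xi N rho mu alpha V Sg (S k).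
Proof.
intros Hk HZl HZr Ha.
assert (Hlast : Nat.eqb k (K - 1) = false) by (apply Nat.eqb_neq; lia).
unfold right_face_rate, left_face_rate, Gp, Fm, vhatR, shatR, vhatL, shatL, fric, sighat.
rewrite Hlast; simpl Nat.eqb.
unfold Phi, eta, qm, pp, Zm, Zp. replace (S k - 1)%nat with k by lia.
set (Zl := Z k 1) in *. set (Zr := Z (S k) (-1)) in *.
assert (0 < Zl * Zr) by (apply Rmult_lt_0_compat; lra).
destruct (alpha (S k)) as [a|].
- assert (0 <= a) by (apply Ha; reflexivity).
  assert (0 < Zl * Zr / (Zl + Zr)) by (apply Rdiv_lt_0_compat; lra).
  assert (0 <= a * (Zl + Zr)) by (apply Rmult_le_pos; lra).
  field; repeat split; lra.
- field; repeat split; lra.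
Qed.

Definition dissipation : R :=
  - sumR K (fun k => F k ^ 2 / Z k (-1) + G k ^ 2 / Z k 1)
  - sumR (K - 1) (fun k => fric xi N rho mu alpha V Sg (S k))
  - (1 - r0 ^ 2) / Z 0 (-1) * p0 xi N rho mu V Sg ^ 2
  - (1 - rL ^ 2) / Z (K - 1) 1 * qL xi N K rho mu V Sg ^ 2.

Hypothesis K_pos : (1 <= K)%nat.
Hypothesis Zs_left_pos : forall k, (k < K)%nat -> 0 < Z k (-1).
Hypothesis Zs_right_pos : forall k, (k < K)%nat -> 0 < Z k 1.
Hypothesis alpha_nonneg : forall k a, (1 <= k)%nat -> (k < K)%nat -> alpha k = Some a -> 0 <= a.

Lemma sumR_face_rates :
  sumR K (fun k => left_face_rate k + right_face_rate k) = dissipation.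
Proof.
rewrite sumR_regroup_faces by exact K_pos.
rewrite left_boundary_rate, right_boundary_rate by (apply Zs_left_pos || apply Zs_right_pos; lia).
rewrite (sumR_ext (K - 1) _ (fun k =>
  - (G k ^ 2 / Z k 1 + F (S k) ^ 2 / Z (S k) (-1)) - fric xi N rho mu alpha V Sg (S k))).
2:{ intros k Hk. apply interface_rate; [lia|apply Zs_right_pos; lia|apply Zs_left_pos; lia|].
    intros a; apply alpha_nonneg; lia. }
unfold dissipation.
rewrite sumR_opp_sub, (sumR_regroup_faces K (fun k => F k ^ 2 / Z k (-1)) (fun k => G k ^ 2 / Z k 1))
  by exact K_pos.
ring.
Qed.

Lemma fric_nonneg k : (1 <= k)%nat -> (k < K)%nat -> 0 <= fric xi N rho mu alpha V Sg k.
Proof.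
intros Hk1 HkK. unfold fric. destruct (alpha k) as [a|] eqn:Ea; [|lra].
assert (0 <= a) by (apply (alpha_nonneg k); assumption).
assert (0 < eta xi N rho mu k).
{ unfold eta, Zm, Zp.
  assert (0 < Z (k - 1) 1) by (apply Zs_right_pos; lia).
  assert (0 < Z k (-1)) by (apply Zs_left_pos; lia).
  apply Rdiv_lt_0_compat; [apply Rmult_lt_0_compat|]; lra. }
apply Rmult_le_pos; [apply Rdiv_le_0_compat; [lra|apply pow_lt; lra]|apply pow2_ge_0].
Qed.

Lemma dissipation_nonpos : -1 <= r0 <= 1 -> -1 <= rL <= 1 -> dissipation <= 0.
Proof.
intros Hr0 HrL. unfold dissipation.
assert (0 <= sumR K (fun k => F k ^ 2 / Z k (-1) + G k ^ 2 / Z k 1)).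
{ apply sumR_nonneg; intros k Hk.
  apply Rplus_le_le_0_compat; apply Rdiv_le_0_compat;
    auto using pow2_ge_0, Zs_left_pos, Zs_right_pos. }
assert (0 <= sumR (K - 1) (fun k => fric xi N rho mu alpha V Sg (S k))).
{ apply sumR_nonneg; intros k Hk; apply fric_nonneg; lia. }
assert (0 <= (1 - r0 ^ 2) / Z 0 (-1) * p0 xi N rho mu V Sg ^ 2).
{ apply Rmult_le_pos; [apply Rdiv_le_0_compat; [nra|apply Zs_left_pos; lia]|apply pow2_ge_0]. }
assert (0 <= (1 - rL ^ 2) / Z (K - 1) 1 * qL xi N K rho mu V Sg ^ 2).
{ apply Rmult_le_pos; [apply Rdiv_le_0_compat; [nra|apply Zs_right_pos; lia]|apply pow2_ge_0]. }
lra.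
Qed.

End Faces.

Theorem theorem2
  (N K : nat) (xi w : nat -> R) (Lp : nat -> R -> R) (Lx : R) (x : nat -> R)
  (rho mu : nat -> nat -> R) (r0 rL : R) (alpha : nat -> option R)
  (v sg dv dsg : nat -> nat -> R -> R) :
  (1 <= N)%nat ->
  (forall i, (i < N)%nat -> xi i < xi (S i)) ->
  -1 <= xi 0%nat -> xi N <= 1 ->
  (forall i, (i <= N)%nat -> 0 < w i) ->
  (forall (c : nat -> R) (f : R -> R) (pr : Riemann_integrable f (-1) 1),
     (forall s, f s = sumR (2 * N) (fun m => c m * s ^ m)) ->
     sumR (S N) (fun i => w i * f (xi i)) = RiemannInt pr) ->
  (forall j s, derivable_pt_lim (lag xi N j) s (Lp j s)) ->
  (1 <= K)%nat -> x 0%nat = 0 -> x K = Lx ->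
  (forall k, (k < K)%nat -> x k < x (S k)) ->
  (forall k j, (k < K)%nat -> (j <= N)%nat -> 0 < rho k j /\ 0 < mu k j) ->
  (forall k, (k < K)%nat ->
     0 < interp xi N (rho k) (-1) /\ 0 < interp xi N (rho k) 1 /\
     0 < interp xi N (mu k) (-1) /\ 0 < interp xi N (mu k) 1) ->
  -1 <= r0 <= 1 -> -1 <= rL <= 1 ->
  (forall k a, (1 <= k)%nat -> (k < K)%nat -> alpha k = Some a -> 0 <= a) ->
  (forall k j t, (k < K)%nat -> (j <= N)%nat ->
     derivable_pt_lim (v k j) t (dv k j t) /\
     derivable_pt_lim (sg k j) t (dsg k j t)) ->
  (forall k j t, (k < K)%nat -> (j <= N)%nat ->
     let V := fun k' j' => v k' j' t in
     let Sg := fun k' j' => sg k' j' t in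
     (x (S k) - x k) / 2 * (w j * rho k j) * dv k j t =
       sumR (S N) (fun i => QN xi w N Lp j i * sg k i t)
       - lag xi N j (-1) * Fm xi N rho mu r0 alpha V Sg k
       - lag xi N j 1 * Gp xi N K rho mu rL alpha V Sg k
     /\
     (x (S k) - x k) / 2 * (w j / mu k j) * dsg k j t =
       sumR (S N) (fun i => QN xi w N Lp j i * v k i t)
       + lag xi N j (-1) * (Fm xi N rho mu r0 alpha V Sg k / Zs xi N rho mu k (-1))
       - lag xi N j 1 * (Gp xi N K rho mu rL alpha V Sg k / Zs xi N rho mu k 1)) ->
  forall t,
    let V := fun k' j' => v k' j' t in
    let Sg := fun k' j' => sg k' j' t in
    let D :=
      - sumR K (fun k =>
          (Fm xi N rho mu r0 alpha V Sg k) ^ 2 / Zs xi N rho mu k (-1)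
          + (Gp xi N K rho mu rL alpha V Sg k) ^ 2 / Zs xi N rho mu k 1)
      - sumR (K - 1) (fun k => fric xi N rho mu alpha V Sg (S k))
      - (1 - r0 ^ 2) / Zs xi N rho mu 0 (-1) * (p0 xi N rho mu V Sg) ^ 2
      - (1 - rL ^ 2) / Zs xi N rho mu (K - 1) 1 * (qL xi N K rho mu V Sg) ^ 2 in
    derivable_pt_lim
      (fun t' => energy N K w x rho mu (fun k j => v k j t') (fun k j => sg k j t'))
      t D
    /\ D <= 0.
Proof.
intros _ _ _ _ _ Hquad HLp HK _ _ _ Hparam Htrace Hr0 HrL Halpha Hdiff Hscheme t V Sg D.
assert (HZl : forall k, (k < K)%nat -> 0 < Zs xi N rho mu k (-1)).
{ intros k Hk; destruct (Htrace k Hk) as (? & ? & ? & ?); apply Zs_pos; assumption. }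
assert (HZr : forall k, (k < K)%nat -> 0 < Zs xi N rho mu k 1).
{ intros k Hk; destruct (Htrace k Hk) as (? & ? & ? & ?); apply Zs_pos; assumption. }
assert (Hrate : energy_rate N K w x rho mu V Sg (fun k j => dv k j t) (fun k j => dsg k j t) = D).
{ transitivity (dissipation xi N K rho mu r0 rL alpha V Sg); [|reflexivity].
  rewrite <- (sumR_face_rates xi N K rho mu r0 rL alpha V Sg HK HZl HZr Halpha).
  apply sumR_ext; intros k Hk. unfold left_face_rate, right_face_rate, vtr, str.
  apply (element_energy_rate xi w N Lp Hquad HLp); intros j Hj; [apply Hparam; lia|].
  apply (Hscheme k j t Hk Hj). }
split.
- rewrite <- Hrate. apply energy_derivable. intros k j Hk Hj. apply Hdiff; assumption.
- apply (dissipation_nonpos xi N K rho mu r0 rL alpha V Sg HK HZl HZr Halpha Hr0 HrL).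
Qed.
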